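(* Let $(p,q,k)$ and $(p',q',k')$ be two distinct integer triples satisfying $(k+\tfrac12)^2<p^2+q^2$ and $(k'+\tfrac12)^2<p'^2+q'^2$, and suppose $\alpha(p,q,k)=\alpha(p',q',k')$. Then $pq'-qp'=0$, i.e. $(p,q)$ and $(p',q')$ are collinear.
   Context: For integers $p,q,k$ with $(k+\tfrac12)^2<p^2+q^2$, put $\lambda=\sqrt{p^2+q^2-(k+\tfrac12)^2}>0$ and let $\alpha(p,q,k)\in\mathbb R/2\pi\mathbb Z$ be the unique angle with $e^{i\alpha(p,q,k)}(p+qi)=k+\tfrac12+\lambda i$ (it exists since both sides have the same modulus). *)

From Stdlib Require Import Reals ZArith.
Open Scope R_scope.

Definition admissible (p q k : Z) : Prop :=
  (IZR k + 1/2)^2 < IZR p ^ 2 + IZR q ^ 2.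

Definition lam (p q k : Z) : R :=
  sqrt (IZR p ^ 2 + IZR q ^ 2 - (IZR k + 1/2)^2).

(* [is_alpha p q k a] : the real number a represents alpha(p,q,k), i.e.
   e^{i a} (p + q i) = (k + 1/2) + lam i, written in real and imaginary parts. *)
Definition is_alpha (p q k : Z) (a : R) : Prop :=
  cos a * IZR p - sin a * IZR q = IZR k + 1/2 /\
  sin a * IZR p + cos a * IZR q = lam p q k.

(* Rotating both vectors (p, q) and (p', q') by the same angle alpha preserves
   their cross product D, their dot product E and the norm N = p^2 + q^2.  After
   the rotation the vectors are (x, l) and (x', l') with x = k + 1/2, x' = k' + 1/2,
   and eliminating l' gives l D = x E - x' N; squaring and clearing denominators,
   (4N - (2k+1)^2) D^2 is an integer square.  Since 4N - (2k+1)^2 = 3 (mod 4) is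
   not a square, D = 0. *)
From Stdlib Require Import Reals ZArith Lia Lra Psatz.
Open Scope R_scope.

Lemma Zsqr_even_mod4 (T : Z) : Z.Even T -> ((T ^ 2) mod 4 = 0)%Z.
Proof.
  intros [b ->].
  replace ((2 * b) ^ 2)%Z with (b ^ 2 * 4)%Z by ring.
  apply Z_mod_mult.
Qed.

Lemma Zsqr_odd_mod4 (T : Z) : Z.Odd T -> ((T ^ 2) mod 4 = 1)%Z.
Proof.
  intros [b ->].
  replace ((2 * b + 1) ^ 2)%Z with (1 + (b ^ 2 + b) * 4)%Z by ring.
  now rewrite Z_mod_plus_full.
Qed.

Lemma mod4_3_mul_sqr_eq_sqr (M D T : Z) :
  (M mod 4 = 3)%Z -> (M * D ^ 2 = T ^ 2)%Z -> exists D' T', D = (2 * D')%Z /\ T = (2 * T')%Z.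
Proof.
  intros HM HE.
  destruct (Z.Even_or_Odd D) as [[D' ->] | HD].
  - destruct (Z.Even_or_Odd T) as [[T' ->] | HT]; [now exists D', T' |].
    exfalso.
    pose proof (Zsqr_odd_mod4 T HT) as HT4.
    rewrite <- HE, Z.mul_mod, (Zsqr_even_mod4 (2 * D')) in HT4 by (lia || now exists D').
    now rewrite Z.mul_0_r in HT4.
  - exfalso.
    pose proof (f_equal (fun z => z mod 4)%Z HE) as H4; cbv beta in H4.
    rewrite Z.mul_mod, HM, (Zsqr_odd_mod4 D HD) in H4 by lia.
    destruct (Z.Even_or_Odd T) as [HT | HT];
      [rewrite Zsqr_even_mod4 in H4 | rewrite Zsqr_odd_mod4 in H4];
      easy.
Qed.

(* Infinite descent on |D|: a solution with D <> 0 would yield one with D/2. *)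
Lemma mod4_3_mul_sqr_eq_sqr_eq0 (M D T : Z) :
  (M mod 4 = 3)%Z -> (M * D ^ 2 = T ^ 2)%Z -> D = 0%Z.
Proof.
  intros HM.
  enough (Hn : forall n : nat, forall D T, (Z.abs D <= Z.of_nat n)%Z ->
                 (M * D ^ 2 = T ^ 2)%Z -> D = 0%Z)
    by (apply (Hn (Z.abs_nat D)); lia).
  induction n as [| n IH]; intros D0 T0 Hbound HE; [lia |].
  destruct (mod4_3_mul_sqr_eq_sqr M D0 T0 HM HE) as (D' & T' & -> & ->).
  enough (D' = 0%Z) by lia.
  apply (IH D' T'); [lia | nia].
Qed.

Lemma rotate_cross (c s u v u' v' : R) : s * s + c * c = 1 ->
  (c * u - s * v) * (s * u' + c * v') - (c * u' - s * v') * (s * u + c * v)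
  = u * v' - v * u'.
Proof.
  intros Hsc.
  transitivity ((s * s + c * c) * (u * v' - v * u')); [ring | rewrite Hsc; ring].
Qed.

Lemma rotate_dot (c s u v u' v' : R) : s * s + c * c = 1 ->
  (c * u - s * v) * (c * u' - s * v') + (s * u + c * v) * (s * u' + c * v')
  = u * u' + v * v'.
Proof.
  intros Hsc.
  transitivity ((s * s + c * c) * (u * u' + v * v')); [ring | rewrite Hsc; ring].
Qed.

Lemma IZR_sqr (z : Z) : IZR (z ^ 2) = IZR z ^ 2.
Proof. rewrite Z.pow_2_r, mult_IZR; ring. Qed.

Lemma lam_sqr (p q k : Z) : admissible p q k ->
  lam p q k ^ 2 = IZR p ^ 2 + IZR q ^ 2 - (IZR k + 1/2) ^ 2.
Proof.
  intros Hadm.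
  unfold lam; rewrite <- Rsqr_pow2.
  apply Rsqr_sqrt; unfold admissible in Hadm; lra.
Qed.

Lemma admissible_norm (p q k : Z) : admissible p q k ->
  IZR (p ^ 2 + q ^ 2) = (IZR k + 1/2) ^ 2 + lam p q k ^ 2.
Proof. intros Hadm; rewrite lam_sqr, plus_IZR, !IZR_sqr by assumption; ring. Qed.

Lemma is_alpha_cross (p q k p' q' k' : Z) (a : R) :
  is_alpha p q k a -> is_alpha p' q' k' a ->
  IZR (p * q' - q * p') = (IZR k + 1/2) * lam p' q' k' - (IZR k' + 1/2) * lam p q k.
Proof.
  intros [<- <-] [<- <-].
  rewrite minus_IZR, !mult_IZR, rotate_cross; [reflexivity |].
  pose proof (sin2_cos2 a) as Hsc; unfold Rsqr in Hsc; exact Hsc.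
Qed.

Lemma is_alpha_dot (p q k p' q' k' : Z) (a : R) :
  is_alpha p q k a -> is_alpha p' q' k' a ->
  IZR (p * p' + q * q') = (IZR k + 1/2) * (IZR k' + 1/2) + lam p q k * lam p' q' k'.
Proof.
  intros [<- <-] [<- <-].
  rewrite plus_IZR, !mult_IZR, rotate_dot; [reflexivity |].
  pose proof (sin2_cos2 a) as Hsc; unfold Rsqr in Hsc; exact Hsc.
Qed.

Lemma cross_dot_norm_identity (x x' l l' : R) :
  (4 * (x ^ 2 + l ^ 2) - (2 * x) ^ 2) * (x * l' - x' * l) ^ 2
  = (2 * x * (x * x' + l * l') - 2 * x' * (x ^ 2 + l ^ 2)) ^ 2.
Proof. ring. Qed.

Lemma IZR_2x1 (k : Z) : IZR (2 * k + 1) = 2 * (IZR k + 1/2).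
Proof. rewrite plus_IZR, mult_IZR; field. Qed.

Lemma is_alpha_cross_sqr (p q k p' q' k' : Z) (a : R) :
  admissible p q k -> is_alpha p q k a -> is_alpha p' q' k' a ->
  ((4 * (p ^ 2 + q ^ 2) - (2 * k + 1) ^ 2) * (p * q' - q * p') ^ 2
   = ((2 * k + 1) * (p * p' + q * q') - (2 * k' + 1) * (p ^ 2 + q ^ 2)) ^ 2)%Z.
Proof.
  intros Hadm Hal Hal'.
  apply eq_IZR.
  rewrite mult_IZR, !IZR_sqr, (is_alpha_cross _ _ _ _ _ _ a Hal Hal'), !minus_IZR.
  rewrite (mult_IZR 4), !(mult_IZR (2 * _ + 1)), (is_alpha_dot _ _ _ _ _ _ a Hal Hal').
  rewrite (admissible_norm p q k Hadm), IZR_sqr, !IZR_2x1.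
  apply cross_dot_norm_identity.
Qed.

Theorem lemma2 (p q k p' q' k' : Z) :
  (p, q, k) <> (p', q', k') ->
  admissible p q k -> admissible p' q' k' ->
  (exists a : R, is_alpha p q k a /\ is_alpha p' q' k' a) ->
  (p * q' - q * p')%Z = 0%Z.
Proof.
  intros _ Hadm _ [a [Hal Hal']].
  apply (mod4_3_mul_sqr_eq_sqr_eq0 (4 * (p ^ 2 + q ^ 2) - (2 * k + 1) ^ 2) _
           ((2 * k + 1) * (p * p' + q * q') - (2 * k' + 1) * (p ^ 2 + q ^ 2))).
  - replace (4 * (p ^ 2 + q ^ 2) - (2 * k + 1) ^ 2)%Z
      with (3 + (p ^ 2 + q ^ 2 - k ^ 2 - k - 1) * 4)%Z by ring.
    now rewrite Z_mod_plus_full.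
  - exact (is_alpha_cross_sqr p q k p' q' k' a Hadm Hal Hal').
Qed.
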